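(* Suppose the forbidden moves $T4$, one of $F1$ or $F2$, and one of $F3$ or $F4$ are allowed, in addition to the moves $R1,R2,R3,T2,T3$. Then the moves $Fu$ and $Fv$ can be realized by finite sequences of these moves. Here $Fu$ (respectively $Fv$) is the move on Gauss diagrams which, given an arrowhead of one chord and an arrowtail of another chord that are separated on the circle by exactly one bar and no other marked point, where the two chords have the same sign (respectively opposite signs), exchanges the positions of this arrowhead and this arrowtail (the bar remaining between them, orientations and signs of chords unchanged).
   Context: A twisted knot diagram is a virtual knot diagram (an oriented generic immersed circle in the plane whose double points are either classical crossings, carrying over/under information, or virtual crossings, carrying none) which may in addition carry finitely many bars: short segments marked transversally on arcs, away from crossings. Twisted knots are equivalence classes of such diagrams under the classical Reidemeister moves $R1,R2,R3$, the virtual Reidemeister moves $V1$–$V4$, and the twisted Reidemeister moves $T1$ (a bar slides through a virtual crossing), $T2$ (two consecutive bars on an arc cancel), $T3$ (a classical crossing having a bar on each of its four incident arcs next to the crossing is replaced by the crossing with over- and under-strand exchanged, the four bars being removed). Gauss diagram of a twisted knot diagram: an oriented circle (the parametrizing circle of the knot) on which are marked, in the order met when traversing the knot from a basepoint, the two preimages of each classical crossing and one point for each bar. For each classical crossing a chord joins its two preimages, oriented from the overcrossing preimage (the arrowtail) to the undercrossing preimage (the arrowhead), and labelled by the sign $\varepsilon\in\{+,-\}$ of the crossing. Virtual crossings are not recorded. Two marked points (chord endpoints or bars) are called adjacent if no other marked point lies between them on the circle. Moves on Gauss diagrams (each may be applied in either direction): - $R1,R2,R3$: the standard Gauss-diagram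 versions of the classical Reidemeister moves, i.e. the changes of Gauss diagrams induced by classical Reidemeister moves on diagrams (e.g. $R1$ adds or removes a chord of any orientation and sign whose two endpoints are adjacent). - $T2$: add or remove two adjacent bars. - $T3$: if each endpoint of a chord is immediately preceded and immediately followed by a bar, remove these four bars, reverse the orientation of the chord and change its sign (the Gauss-diagram version of the move $T3$ above). Virtual moves and $T1$ do not change the Gauss diagram. Forbidden moves: - $T4$: add or remove a chord (of any orientation and sign) whose two endpoints are separated by exactly one bar and no other marked point (a curl with a bar). - $F1$: exchange the positions of two adjacent arrowheads of different chords (signs arbitrary). - $F2$: exchange the positions of two adjacent arrowtails of different chords (signs arbitrary). - $F3$: if two arrowheads of different chords are separated by exactly one bar and no other marked point, exchange their positions (the bar stays between them). - $F4$: the same as $F3$ for two arrowtails. *)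

From mathcomp Require Import all_boot.
From Stdlib Require Import Relations.Relation_Operators.

Set Implicit Arguments.
Unset Strict Implicit.
Unset Printing Implicit Defensive.

(* A marked point on the parametrizing circle: a bar, or an endpoint of the
   chord labelled [c]; [hd = true] means arrowhead (undercrossing preimage),
   [hd = false] arrowtail (overcrossing preimage); [sg = true] means sign +. *)
Inductive pt := Bar | End (c : nat) (hd : bool) (sg : bool).

(* A Gauss diagram is the list of marked points read from a basepoint along
   the orientation of the circle (considered cyclically, see [mv_rot]). *)
Definition gdiag := seq pt.
Definition grel := gdiag -> gdiag -> Prop.

Definition lab (p : pt) : option nat := if p is End c _ _ then Some c else None.
Definition labels (D : gdiag) : seq nat := pmap lab D.

Definition is_endp (c : nat) (h : bool) (p : pt) : bool :=
  if p is End c' h' _ then (c' == c) && (h' == h) else false.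
Definition sign_is (c : nat) (s : bool) (p : pt) : bool :=
  if p is End c' _ s' then (c' == c) ==> (s' == s) else true.

Definition wf (D : gdiag) : Prop :=
  forall c, c \in labels D ->
    [/\ count (is_endp c true) D = 1%N, count (is_endp c false) D = 1%N
      & exists s, all (sign_is c s) D].

Definition relab (f : nat -> nat) (p : pt) : pt :=
  if p is End c h s then End (f c) h s else p.

Inductive mv_rot : grel := MvRot D : mv_rot D (rot 1 D).
Inductive mv_relabel : grel :=
  MvRelab D (f : nat -> nat) : injective f -> mv_relabel D (map (relab f) D).

Inductive mv_R1 : grel :=
  MvR1 X Y c h s : c \notin labels (X ++ Y) ->
    mv_R1 (X ++ Y) (X ++ [:: End c h s; End c (~~ h) s] ++ Y).

(* ---- R2: two chords of opposite signs whose arrowtails are adjacent and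
   whose arrowheads are adjacent (strands parallel or antiparallel) ---- *)
Inductive mv_R2 : grel :=
  MvR2 X Y Z a b h s (par : bool) :
    a != b -> a \notin labels (X ++ Y ++ Z) -> b \notin labels (X ++ Y ++ Z) ->
    mv_R2 (X ++ Y ++ Z)
      (X ++ [:: End a h s; End b h (~~ s)] ++ Y ++
       (if par then [:: End a (~~ h) s; End b (~~ h) (~~ s)]
               else [:: End b (~~ h) (~~ s); End a (~~ h) s]) ++ Z).

(* Three strands (lines) 1,2,3; chord [a] is the crossing of
   lines 1,2, [b] of lines 2,3, [c] of lines 3,1, with signs e12 e23 e31;
   [oij = true] iff line i passes over line j (not cyclic, so that there is a
   top, a middle and a bottom strand).  On line i the two endpoints are
   adjacent; [si = true] iff on line i the crossing with line i-1 comes first.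
   A configuration comes from three lines in the plane iff
   e12+o12+s1+s2 = e23+o23+s2+s3 = e31+o31+s3+s1 (mod 2) (this is
   (sign) = (over-indicator)*s_i*s_(i+1)*(orientation of the triangle)). *)
Definition seg2 (s : bool) (p n : pt) : gdiag := if s then [:: p; n] else [:: n; p].

Definition R3_ok (e12 e23 e31 o12 o23 o31 s1 s2 s3 : bool) : bool :=
  ~~ [&& o12 == o23 & o23 == o31] &&
  [&& e12 (+) o12 (+) s1 (+) s2 == e23 (+) o23 (+) s2 (+) s3
    & e23 (+) o23 (+) s2 (+) s3 == e31 (+) o31 (+) s3 (+) s1].

Inductive mv_R3 : grel :=
  MvR3 X1 X2 X3 a b c e12 e23 e31 o12 o23 o31 s1 s2 s3 :
    uniq [:: a; b; c] -> R3_ok e12 e23 e31 o12 o23 o31 s1 s2 s3 ->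
    mv_R3
      (X1 ++ seg2 s1 (End c o31 e31) (End a (~~ o12) e12) ++
       X2 ++ seg2 s2 (End a o12 e12) (End b (~~ o23) e23) ++
       X3 ++ seg2 s3 (End b o23 e23) (End c (~~ o31) e31))
      (X1 ++ seg2 (~~ s1) (End c o31 e31) (End a (~~ o12) e12) ++
       X2 ++ seg2 (~~ s2) (End a o12 e12) (End b (~~ o23) e23) ++
       X3 ++ seg2 (~~ s3) (End b o23 e23) (End c (~~ o31) e31)).

Inductive mv_T2 : grel :=
  MvT2 X Y : mv_T2 (X ++ Y) (X ++ [:: Bar; Bar] ++ Y).

Inductive mv_T3 : grel :=
  MvT3 X Y Z c h s :
    mv_T3 (X ++ [:: Bar; End c h s; Bar] ++ Y ++ [:: Bar; End c (~~ h) s; Bar] ++ Z)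
          (X ++ [:: End c (~~ h) (~~ s)] ++ Y ++ [:: End c h (~~ s)] ++ Z).

Inductive mv_T4 : grel :=
  MvT4 X Y c h s : c \notin labels (X ++ Y) ->
    mv_T4 (X ++ Y) (X ++ [:: End c h s; Bar; End c (~~ h) s] ++ Y).

Inductive mv_F12 (hd : bool) : grel :=
  MvF12 X Y a b s t : a != b ->
    mv_F12 hd (X ++ [:: End a hd s; End b hd t] ++ Y)
              (X ++ [:: End b hd t; End a hd s] ++ Y).
Definition mv_F1 := mv_F12 true.
Definition mv_F2 := mv_F12 false.

Inductive mv_F34 (hd : bool) : grel :=
  MvF34 X Y a b s t : a != b ->
    mv_F34 hd (X ++ [:: End a hd s; Bar; End b hd t] ++ Y)
              (X ++ [:: End b hd t; Bar; End a hd s] ++ Y).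
Definition mv_F3 := mv_F34 true.
Definition mv_F4 := mv_F34 false.

Inductive mv_Fuv (same : bool) : grel :=
  | MvFuvHT X Y a b s t : a != b -> (s == t) = same ->
      mv_Fuv same (X ++ [:: End a true s; Bar; End b false t] ++ Y)
                  (X ++ [:: End b false t; Bar; End a true s] ++ Y)
  | MvFuvTH X Y a b s t : a != b -> (s == t) = same ->
      mv_Fuv same (X ++ [:: End b false t; Bar; End a true s] ++ Y)
                  (X ++ [:: End a true s; Bar; End b false t] ++ Y).
Definition mv_Fu := mv_Fuv true.
Definition mv_Fv := mv_Fuv false.

Definition allowed (useF1 useF3 : bool) : grel := fun D D' =>
  mv_rot D D' \/ mv_relabel D D' \/ mv_R1 D D' \/ mv_R2 D D' \/ mv_R3 D D' \/
  mv_T2 D D' \/ mv_T3 D D' \/ mv_T4 D D' \/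
  (if useF1 then mv_F1 D D' else mv_F2 D D') \/
  (if useF3 then mv_F3 D D' else mv_F4 D D').

Definition reach (useF1 useF3 : bool) : grel :=
  clos_refl_sym_trans gdiag (allowed useF1 useF3).

(* Flipping a chord by T3 turns its arrowtail into an arrowhead (and back), so
   the arrowhead/arrowtail pair to be exchanged becomes a pair of arrowheads,
   or of arrowtails, which F1 or F2 exchanges.  What remains is to move the bar
   across these endpoints, and a bar slides past an arrowhead using F1 alone:
   create a curl with T4, drag its arrowhead across by F1, flip the curl by T3
   (which carries its bar to the other side) and remove it by T4.  The same
   works for arrowtails and F2.  Neither F3/F4 nor the signs play any role. *)
From HB Require Import structures.
From mathcomp Require Import all_boot.
From Stdlib Require Import Relations.Relation_Operators.

Set Implicit Arguments.
Unset Strict Implicit.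
Unset Printing Implicit Defensive.

Definition pt_eqb (p q : pt) : bool :=
  match p, q with
  | Bar, Bar => true
  | End c h s, End c' h' s' => [&& c == c', h == h' & s == s']
  | _, _ => false
  end.

Lemma pt_eqP : Equality.axiom pt_eqb.
Proof.
case=> [|c h s] [|c' h' s'] /=; try by constructor.
by apply: (iffP and3P) => [[/eqP-> /eqP-> /eqP->] | [-> -> ->]].
Qed.

HB.instance Definition _ := hasDecEq.Build pt pt_eqP.

Lemma eq_End c h s c' h' s' :
  (End c h s == End c' h' s') = [&& c == c', h == h' & s == s'].
Proof. by []. Qed.

Lemma exists_fresh (s : seq nat) : exists c, c \notin s.
Proof.
exists (\max_(i <- s) i).+1.
by apply/negP => /(@leq_bigmax_seq _ s predT id) /(_ isT); rewrite ltnn.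
Qed.

Lemma wf_partner D c h s :
  wf D -> End c h s \in D -> End c (~~ h) s \in D.
Proof.
move=> wfD cD.
have c_lab : c \in labels D by rewrite mem_pmap; apply: (map_f lab cD).
have [cnt1 cnt2 [s0 /allP signs]] := wfD c c_lab.
have : has (is_endp c (~~ h)) D.
  by rewrite has_count; case: h {cD} => /=; [rewrite cnt2 | rewrite cnt1].
case/hasP=> [[|c' h' s'] pD] //= /andP [/eqP Ec /eqP Eh]; subst c' h'.
have /= := signs _ cD; have /= := signs _ pD; rewrite eqxx /= => /eqP Es' /eqP Es.
by rewrite Es -Es'.
Qed.

Lemma reach_trans useF1 useF3 D2 D1 D3 :
  reach useF1 useF3 D1 D2 -> reach useF1 useF3 D2 D3 -> reach useF1 useF3 D1 D3.
Proof. exact: rst_trans. Qed.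
Arguments reach_trans {useF1 useF3} D2 [D1 D3].

Section Moves.
Context {useF1 useF3 : bool}.
Local Notation reach := (reach useF1 useF3).

Lemma reach_rot X Y : reach (X ++ Y) (Y ++ X).
Proof.
elim: X Y => [|p X IHX] Y; first by rewrite cats0; apply: rst_refl.
apply: (reach_trans (X ++ Y ++ [:: p])).
  by apply: rst_step; left; rewrite catA cats1 -rot1_cons; apply: MvRot.
by have := IHX (Y ++ [:: p]); rewrite -catA.
Qed.

Lemma reach_T2 X Y D D' :
  D = X ++ Y -> D' = X ++ Bar :: Bar :: Y -> reach D D'.
Proof. by move=> -> ->; apply: rst_step; do 5 right; left; apply: MvT2. Qed.

Lemma reach_T3 X Y Z c h s D D' :
  D = X ++ [:: Bar; End c h s; Bar] ++ Y ++ [:: Bar; End c (~~ h) s; Bar] ++ Z ->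
  D' = X ++ End c (~~ h) (~~ s) :: Y ++ End c h (~~ s) :: Z ->
  reach D D'.
Proof. by move=> -> ->; apply: rst_step; do 6 right; left; apply: MvT3. Qed.

Lemma reach_T4 X Y c h s D D' : c \notin labels (X ++ Y) ->
  D = X ++ Y -> D' = X ++ [:: End c h s; Bar; End c (~~ h) s] ++ Y ->
  reach D D'.
Proof. by move=> c_fresh -> ->; apply: rst_step; do 7 right; left; apply: MvT4. Qed.

End Moves.

Lemma reach_F12 hd {useF3} X Y a b s t D D' : a != b ->
  D = X ++ [:: End a hd s; End b hd t] ++ Y ->
  D' = X ++ [:: End b hd t; End a hd s] ++ Y ->
  reach hd useF3 D D'.
Proof.
by move=> neq_ab -> ->; apply: rst_step; do 8 right; left; case: hd; apply: MvF12.
Qed.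

Ltac cat_eq := rewrite /= -?catA /= ?negbK.

Lemma bar_slide hd {useF3} X Y a s :
  reach hd useF3 (X ++ [:: End a hd s; Bar] ++ Y) (X ++ [:: Bar; End a hd s] ++ Y).
Proof.
set p := End a hd s.
have [c c_fresh] := exists_fresh (labels (X ++ p :: Y)).
have neq_ca : c != a.
  by apply: contraNneq c_fresh => ->; rewrite /labels pmap_cat mem_cat /= mem_head orbT.
pose q (h e : bool) := End c h e.
apply: (reach_trans (X ++ [:: q (~~ hd) true; Bar; q hd true; p; Bar] ++ Y)).
  apply: (reach_T4 (X := X) (Y := p :: Bar :: Y) (h := ~~ hd)) => //; last by cat_eq.
  by move: c_fresh; rewrite /labels !pmap_cat.
apply: (reach_trans (X ++ [:: q (~~ hd) true; Bar; p; q hd true; Bar] ++ Y)).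
  apply: (reach_F12 (X := X ++ [:: q (~~ hd) true; Bar]) (Y := Bar :: Y) neq_ca);
    by cat_eq.
apply: (reach_trans
          (X ++ [:: Bar; Bar; q (~~ hd) true; Bar; p; q hd true; Bar] ++ Y)).
  exact: (reach_T2 (X := X)).
apply: (reach_trans
          (X ++ [:: Bar; Bar; q (~~ hd) true; Bar; p; Bar; Bar; q hd true; Bar] ++ Y)).
  apply: (reach_T2 (X := X ++ [:: Bar; Bar; q (~~ hd) true; Bar; p])
                   (Y := q hd true :: Bar :: Y)); by cat_eq.
apply: (reach_trans (X ++ [:: Bar; q hd false; p; Bar; q (~~ hd) false] ++ Y)).
  apply: (reach_T3 (X := X ++ [:: Bar]) (Y := [:: p; Bar]) (Z := Y)
                   (h := ~~ hd) (s := true)); by cat_eq.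
apply: (reach_trans (X ++ [:: Bar; p; q hd false; Bar; q (~~ hd) false] ++ Y)).
  apply: (reach_F12 (X := X ++ [:: Bar]) (Y := Bar :: q (~~ hd) false :: Y) neq_ca);
    by cat_eq.
apply/rst_sym/(reach_T4 (X := X ++ [:: Bar; p]) (Y := Y) (c := c) (h := hd) (s := false));
  try by cat_eq.
by move: c_fresh; rewrite /labels -catA !pmap_cat.
Qed.

Lemma bar_pair_rev hd {useF3} X Y a b s t : a != b ->
  reach hd useF3 (X ++ [:: Bar; End a hd s; End b hd t] ++ Y)
                 (X ++ [:: End b hd t; End a hd s; Bar] ++ Y).
Proof.
move=> neq_ab.
apply: (reach_trans (X ++ [:: End a hd s; Bar; End b hd t] ++ Y)).
  exact/rst_sym/bar_slide.
apply: (reach_trans (X ++ [:: End a hd s; End b hd t; Bar] ++ Y)).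
  apply/rst_sym; have := @bar_slide hd useF3 (X ++ [:: End a hd s]) Y b t.
  by cat_eq.
exact: (reach_F12 (X := X) (Y := Bar :: Y) neq_ab).
Qed.

Lemma swap_head_tail_F1 {useF3} a b s t W1 W2 : a != b ->
  reach true useF3
    ([:: End a true s; Bar; End b false t] ++ W1 ++ End b true t :: W2)
    ([:: End b false t; Bar; End a true s] ++ W1 ++ End b true t :: W2).
Proof.
move=> neq_ab.
set R := W1 ++ Bar :: End b false (~~ t) :: Bar :: W2.
apply: (reach_trans (End a true s :: End b true (~~ t) :: Bar :: R)).
  apply: (reach_trans (End a true s :: Bar :: Bar :: End b true (~~ t) :: Bar :: R)).
    apply/rst_sym/(reach_T3 (X := [:: End a true s; Bar]) (Y := W1) (Z := W2)
                            (c := b) (h := true) (s := ~~ t)); by cat_eq.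
  by apply/rst_sym/(reach_T2 (X := [:: End a true s])).
apply: (reach_trans (Bar :: End b true (~~ t) :: End a true s :: R)).
  by apply/rst_sym/(bar_pair_rev _ [::] R); rewrite eq_sym.
apply: (reach_trans (Bar :: End b true (~~ t) :: Bar :: Bar :: End a true s :: R)).
  exact: (reach_T2 (X := [:: Bar; End b true (~~ t)])).
apply: (reach_T3 (X := [::]) (Y := Bar :: End a true s :: W1) (Z := W2)
                 (c := b) (h := true) (s := ~~ t)); by cat_eq.
Qed.

Lemma swap_head_tail_F2 {useF3} a b s t W1 W2 : a != b ->
  reach false useF3
    ([:: End a true s; Bar; End b false t] ++ W1 ++ End a false s :: W2)
    ([:: End b false t; Bar; End a true s] ++ W1 ++ End a false s :: W2).
Proof.
move=> neq_ab.
set R := W1 ++ Bar :: End a true (~~ s) :: Bar :: W2.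
apply: (reach_trans (Bar :: End a false (~~ s) :: End b false t :: R)).
  apply: (reach_trans (Bar :: End a false (~~ s) :: Bar :: Bar :: End b false t :: R)).
    apply/rst_sym/(reach_T3 (X := [::]) (Y := Bar :: End b false t :: W1) (Z := W2)
                            (c := a) (h := false) (s := ~~ s)); by cat_eq.
  by apply/rst_sym/(reach_T2 (X := [:: Bar; End a false (~~ s)])).
apply: (reach_trans (End b false t :: End a false (~~ s) :: Bar :: R)).
  exact: (bar_pair_rev _ [::] R).
apply: (reach_trans (End b false t :: Bar :: Bar :: End a false (~~ s) :: Bar :: R)).
  exact: (reach_T2 (X := [:: End b false t])).
apply: (reach_T3 (X := [:: End b false t; Bar]) (Y := W1) (Z := W2)
                 (c := a) (h := false) (s := ~~ s)); by cat_eq.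
Qed.

Lemma wf_partner_outside X M Y c h s :
  wf (X ++ M ++ Y) -> End c (~~ h) s \in M -> End c h s \notin M ->
  End c h s \in Y ++ X.
Proof.
move=> wfD partner_in_M notin_M.
have /(wf_partner wfD) : End c (~~ h) s \in X ++ M ++ Y.
  by rewrite !mem_cat partner_in_M orbT.
by rewrite negbK !mem_cat (negbTE notin_M) orbC.
Qed.

Lemma reach_swap_head_tail useF1 useF3 X Y a b s t : a != b ->
  (if useF1 then End b true t else End a false s) \in Y ++ X ->
  reach useF1 useF3 (X ++ [:: End a true s; Bar; End b false t] ++ Y)
                    (X ++ [:: End b false t; Bar; End a true s] ++ Y).
Proof.
move=> neq_ab partner_in.
apply: (reach_trans ([:: End a true s; Bar; End b false t] ++ Y ++ X)).
  by have := reach_rot X ([:: End a true s; Bar; End b false t] ++ Y); rewrite -catA.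
apply: (reach_trans ([:: End b false t; Bar; End a true s] ++ Y ++ X)); last first.
  by have := reach_rot ([:: End b false t; Bar; End a true s] ++ Y) X; rewrite -catA.
case/splitPr: partner_in => W1 W2.
by case: useF1; [apply: swap_head_tail_F1 | apply: swap_head_tail_F2].
Qed.

Theorem lemma1 (useF1 useF3 : bool) (D D' : gdiag) :
  wf D -> (mv_Fu D D' \/ mv_Fv D D') -> reach useF1 useF3 D D'.
Proof.
move=> wfD move_uv.
have [same swap] : exists same, mv_Fuv same D D'.
  by case: move_uv; [exists true | exists false].
case: swap wfD => X Y a b s t neq_ab _ wfD; [|apply: rst_sym];
  apply: reach_swap_head_tail => //;
  case: useF1; apply: (wf_partner_outside wfD);
  by rewrite !inE !eq_End !eqxx ?(eq_sym b) (negbTE neq_ab) /= ?orbT ?orbF.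
Qed.
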